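(* The morphism $\pi_N:\mathcal M(N,K)\to L^-\mathrm{GL}_K$, $(B,\psi,\overline\psi)\mapsto1+\overline\psi(z-\widetilde B/2)^{-1}\psi$, is Poisson.
   Context: $\mathcal M(N,K)=\mathrm{Rep}(N,K)/\!/\mathrm{GL}_N$, with $\mathrm{Rep}(N,K)$ the triples $(B,\psi,\overline\psi)$, $B\in\mathrm{Mat}_{N\times N}(\mathbb C)$, $\psi\in\mathrm{Mat}_{N\times K}$, $\overline\psi\in\mathrm{Mat}_{K\times N}$, and $g\cdot(B,\psi,\overline\psi)=(gBg^{-1},g\psi,\overline\psi g^{-1})$; its Poisson structure is induced from $\{\psi_{ia},\overline\psi_{bj}\}=\delta_{ab}\delta_{ij}$, $\{B_{mn},B_{pq}\}=\delta_{np}\sum_a\overline\psi_{aq}\psi_{ma}-\delta_{mq}\sum_a\overline\psi_{an}\psi_{pa}$, $\{B_{mn},\psi_{ia}\}=\{B_{mn},\overline\psi_{bj}\}=0$ (commuting variables). $\widetilde B=B+\psi\overline\psi$ and $(z-\widetilde B/2)^{-1}$ is expanded as a power series in $z^{-1}$. $L^-\mathrm{GL}_K$ is the group of series $1+\sum_{i\ge1}g_iz^{-i}$, $g_i\in\mathfrak{gl}_K$; $T^{(n)}_{ab}$ is the $(a,b)$ entry of $g_{n+1}$, $T^{(-1)}_{ab}=\delta_{ab}$, $T_{ab}(u)=\sum_{i\ge-1}T^{(i)}_{ab}u^{-i-1}$, and its Poisson structure is $(u-v)\{T_{ab}(u),T_{cd}(v)\}=T_{ad}(v)T_{cb}(u)-T_{ad}(u)T_{cb}(v)$.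 *)

From HB Require Import structures.
From mathcomp Require Import all_boot all_order all_algebra.
From mathcomp Require Import mpoly.
Set Implicit Arguments. Unset Strict Implicit. Unset Printing Implicit Defensive.
Import Order.TTheory GRing.Theory Num.Theory.
Local Open Scope ring_scope.

(* Coordinate ring of Rep(N,K): polynomials in the N*N + N*K + K*N
   commuting variables B_mn, psi_ia, psibar_bj. *)
Definition nvar (N K : nat) : nat := (N * N + (N * K + K * N))%N.

Section Rep.
Variables (F : numClosedFieldType) (N K : nat).

Definition RepPoly := {mpoly F[nvar N K]}.

Definition varB (m n : 'I_N) : 'I_(nvar N K) :=
  lshift (N * K + K * N) (mxvec_index m n).
Definition varPsi (i : 'I_N) (a : 'I_K) : 'I_(nvar N K) :=
  rshift (N * N) (lshift (K * N) (mxvec_index i a)).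
Definition varPsibar (b : 'I_K) (j : 'I_N) : 'I_(nvar N K) :=
  rshift (N * N) (rshift (N * K) (mxvec_index b j)).

Definition Bmx : 'M[RepPoly]_N := \matrix_(m, n) 'X_(varB m n).
Definition Psimx : 'M[RepPoly]_(N, K) := \matrix_(i, a) 'X_(varPsi i a).
Definition Psibarmx : 'M[RepPoly]_(K, N) := \matrix_(b, j) 'X_(varPsibar b j).

Definition Btilde : 'M[RepPoly]_N := Bmx + Psimx *m Psibarmx.

(* The Poisson bracket on functions on Rep(N,K): the unique biderivation
   (for commuting variables) extending the brackets of the coordinates:
   {psi_ia, psibar_bj} = delta_ab delta_ij (hence {psibar_bj, psi_ia} = -...),
   {B_mn, B_pq} = delta_np sum_a psibar_aq psi_ma - delta_mq sum_a psibar_an psi_pa,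
   all other brackets of coordinates zero. *)
Definition brBB (m n p q : 'I_N) : RepPoly :=
  (n == p)%:R * (\sum_(a < K) 'X_(varPsibar a q) * 'X_(varPsi m a))
  - (m == q)%:R * (\sum_(a < K) 'X_(varPsibar a n) * 'X_(varPsi p a)).

Definition pbr (f g : RepPoly) : RepPoly :=
  \sum_(i < N) \sum_(a < K)
     (mderiv (varPsi i a) f * mderiv (varPsibar a i) g
      - mderiv (varPsibar a i) f * mderiv (varPsi i a) g)
  + \sum_(m < N) \sum_(n < N) \sum_(p < N) \sum_(q < N)
     mderiv (varB m n) f * mderiv (varB p q) g * brBB m n p q.

(* Pullback along pi_N of the coefficient of u^{-k} in T_ab(u), i.e. of
   T^{(k-1)}_{ab}:  k = 0 gives delta_ab, and for k = j+1,
   T^{(j)}_{ab} = (g_{j+1})_{ab} = (psibar (Btilde/2)^j psi)_{ab},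
   from 1 + psibar (z - Btilde/2)^{-1} psi = 1 + sum_j psibar (Btilde/2)^j psi z^{-j-1}. *)
Definition piT (k : nat) (a b : 'I_K) : RepPoly :=
  match k with
  | 0%N => (a == b)%:R
  | j.+1 => (((2%:R : F) ^- j)%:MP *: (Psibarmx *m (Btilde ^+ j) *m Psimx)) a b
  end.

End Rep.
Arguments piT : clear implicits.

From HB Require Import structures.
From mathcomp Require Import all_boot all_order all_algebra.
From mathcomp Require Import mpoly.
From mathcomp Require Import ring zify.
Import Order.TTheory GRing.Theory Num.Theory.
Local Open Scope ring_scope.
Set Implicit Arguments. Unset Strict Implicit.

(* Put W_0 = 1 and W_(k+1) = psibar Btilde^k psi, so that T^(k)_ab is the (a,b) entry
   of 2^-k W_(k+1).  The entries of Btilde Poisson-commute, and psi, psibar bracket with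
   Btilde through matrix units.  Since the bracket is a biderivation,
   {(W_(k+1))_ab, (W_(l+1))_cd} is a signed sum of four sums of (W_x)_ad (W_y)_cb along
   the antidiagonal x + y = k + l + 1.  Passing from (k+1, l) to (k, l+1) everything
   cancels except 2 ((W_(l+1))_ad (W_(k+1))_cb - (W_(k+1))_ad (W_(l+1))_cb), and the
   normalisation 2^-k absorbs the factor 2. *)

Section AntidiagonalSums.
Variables (V : zmodType) (phi : nat -> nat -> V).

Definition antidiag_sum n lo m := \sum_(t < m) phi (lo + t) (n - (lo + t)).

Definition bracket_kernel k l :=
  antidiag_sum (k + l).+1 k.+1 l.+1 + antidiag_sum (k + l).+1 l.+1 k
  - antidiag_sum (k + l).+1 0 l.+1 - antidiag_sum (k + l).+1 1 k.

Lemma antidiag_sumSl n lo m :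
  antidiag_sum n lo m.+1 = phi lo (n - lo) + antidiag_sum n lo.+1 m.
Proof.
rewrite /antidiag_sum big_ord_recl addn0; congr (_ + _).
by apply: eq_bigr => t _; rewrite /= addSnnS.
Qed.

Lemma antidiag_sumSr n lo m :
  antidiag_sum n lo m.+1 = antidiag_sum n lo m + phi (lo + m) (n - (lo + m)).
Proof. exact: big_ord_recr. Qed.

Lemma antidiag_sum_rev n lo m :
  antidiag_sum n lo m = \sum_(t < m) phi (lo + (m - t.+1)) (n - (lo + (m - t.+1))).
Proof. exact: (reindex_inj rev_ord_inj). Qed.

Lemma bracket_kernel0l l : bracket_kernel 0 l = phi l.+1 0 - phi 0 l.+1.
Proof.
rewrite /bracket_kernel add0n antidiag_sumSr [antidiag_sum _ 0 _]antidiag_sumSl.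
rewrite /antidiag_sum !big_ord0 subnn subn0 add1n.
by rewrite addr0 subr0 [phi 0 _ + _]addrC opprD addrACA subrr add0r.
Qed.

Lemma bracket_kernell0 k : bracket_kernel k 0 = phi k.+1 0 - phi 0 k.+1.
Proof.
rewrite /bracket_kernel addn0 /antidiag_sum !big_ord1 !addn0 subnn subn0.
by rewrite addrAC addrK.
Qed.

Lemma bracket_kernelSS k l :
  bracket_kernel k.+1 l - bracket_kernel k l.+1 = (phi l.+1 k.+1 - phi k.+1 l.+1) *+ 2.
Proof.
rewrite /bracket_kernel addSn addnS.
rewrite [antidiag_sum _ k.+1 l.+2]antidiag_sumSl [antidiag_sum _ l.+1 k.+1]antidiag_sumSl.
rewrite [antidiag_sum _ 0 l.+2]antidiag_sumSr [antidiag_sum _ 1 k.+1]antidiag_sumSr.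
have -> : ((k + l).+2 - k.+1 = l.+1)%N by lia.
have -> : ((k + l).+2 - l.+1 = k.+1)%N by lia.
rewrite add0n add1n.
rewrite !opprD !opprK !addrA mulr2n.
by rewrite (ACl ((2*6)*(11*7)*((1*8)*(3*9)*(4*10)*(5*12))))/= !subrr !addNr !addr0.
Qed.

End AntidiagonalSums.

Section MatrixEntries.
Variable R : pzRingType.

Lemma oppmxE m n (A : 'M[R]_(m, n)) i j : (- A) i j = - A i j.
Proof. by rewrite mxE. Qed.

Lemma addmxE m n (A B : 'M[R]_(m, n)) i j : (A + B) i j = A i j + B i j.
Proof. by rewrite mxE. Qed.

Lemma mul_delta_mulmxE m n p q (P : 'M[R]_(m, n)) (Q : 'M[R]_(p, q)) i j x y :
  (P *m delta_mx i j *m Q) x y = P x i * Q j y.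
Proof.
rewrite -mulmxA mxE (bigD1 i) //= big1 => [|k /negbTE nki].
  rewrite addr0 mxE (bigD1 j) //= mxE !eqxx mul1r big1 ?addr0 // => k /negbTE nkj.
  by rewrite mxE nkj andbF mul0r.
by rewrite mxE big1 ?mulr0 // => k' _; rewrite mxE nki mul0r.
Qed.

Lemma delta_mulmxE m n p (Q : 'M[R]_(n, p)) (i : 'I_m) j x y :
  (delta_mx i j *m Q) x y = (x == i)%:R * Q j y.
Proof. by rewrite -[delta_mx i j]mul1mx mul_delta_mulmxE mxE. Qed.

Lemma mulmx_deltaE m n p (P : 'M[R]_(m, n)) i (j : 'I_p) x y :
  (P *m delta_mx i j) x y = P x i * (y == j)%:R.
Proof. by rewrite -(mulmx1 (P *m delta_mx i j)) mul_delta_mulmxE mxE eq_sym. Qed.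

Lemma exprD_mulmx n (A : 'M[R]_n) x y : A ^+ (x + y) = A ^+ x *m A ^+ y.
Proof. by rewrite exprD. Qed.

Lemma sum_delta2 m n (i : 'I_m) (j : 'I_n) (G : 'I_m -> 'I_n -> R) :
  \sum_(i' < m) \sum_(j' < n) ((i == i') && (j == j'))%:R * G i' j' = G i j.
Proof.
rewrite (bigD1 i) //= [X in _ + X]big1 => [|i' /negbTE ni'i]; last first.
  by rewrite big1 // => j' _; rewrite eq_sym ni'i mul0r.
rewrite addr0 (bigD1 j) //= !eqxx mul1r big1 ?addr0 // => j' /negbTE nj'j.
by rewrite eq_sym nj'j mul0r.
Qed.

End MatrixEntries.

Section Derivations.
Variable R : comPzRingType.
Implicit Types (D E : R -> R) (f g h : R).

Record derivation D : Prop := Derivation {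
  derivationB : forall f g, D (f - g) = D f - D g;
  derivationM : forall f g, D (f * g) = D f * g + f * D g }.

Lemma derivation_add D E : derivation D -> derivation E -> derivation (fun f => D f + E f).
Proof.
move=> dD dE; split=> f g.
  by rewrite (derivationB dD) (derivationB dE) opprD addrACA.
by rewrite (derivationM dD) (derivationM dE) mulrDl mulrDr addrACA.
Qed.

Lemma derivation_sub D E : derivation D -> derivation E -> derivation (fun f => D f - E f).
Proof.
move=> dD dE; split=> f g.
  by rewrite (derivationB dD) (derivationB dE); ring.
by rewrite (derivationM dD) (derivationM dE); ring.
Qed.

Lemma derivation_big (I : finType) (D : I -> R -> R) : (forall i, derivation (D i)) ->
  derivation (fun f => \sum_i D i f).
Proof.
move=> dD; split=> f g.
  by rewrite -sumrB; apply: eq_bigr => i _; rewrite (derivationB (dD i)).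
by rewrite mulr_suml mulr_sumr -big_split; apply: eq_bigr => i _; rewrite (derivationM (dD i)).
Qed.

Lemma derivation_mulr D h : derivation D -> derivation (fun f => D f * h).
Proof.
move=> dD; split=> f g; first by rewrite (derivationB dD) mulrBl.
by rewrite (derivationM dD) mulrDl -!mulrA [g * h]mulrC.
Qed.

Section DerivationTheory.
Variables (D : R -> R) (dD : derivation D).

Lemma derivation0 : D 0 = 0.
Proof. by have := derivationB dD 0 0; rewrite !subrr. Qed.

Lemma derivationN f : D (- f) = - D f.
Proof. by rewrite -sub0r (derivationB dD) derivation0 sub0r. Qed.

Lemma derivationD f g : D (f + g) = D f + D g.
Proof. by rewrite -{1}[g]opprK (derivationB dD) derivationN opprK. Qed.

Lemma derivation_sum I r (P : pred I) (F : I -> R) :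
  D (\sum_(i <- r | P i) F i) = \sum_(i <- r | P i) D (F i).
Proof. exact: (big_morph D derivationD derivation0). Qed.

Lemma derivation_nat k : D k%:R = 0.
Proof.
have D1 : D 1 = 0.
  have := derivationM dD 1 1; rewrite !(mulr1, mul1r) => D1.
  by apply: (addrI (D 1)); rewrite addr0 -D1.
by elim: k => [|k IHk]; rewrite ?derivation0 // -addn1 natrD derivationD IHk D1 addr0.
Qed.

Lemma map_mx_derivationM m n p (P : 'M[R]_(m, n)) (Q : 'M[R]_(n, p)) :
  map_mx D (P *m Q) = map_mx D P *m Q + P *m map_mx D Q.
Proof.
apply/matrixP => i j; rewrite !mxE derivation_sum -big_split /=.
by apply: eq_bigr => k _; rewrite (derivationM dD) !mxE.
Qed.

Lemma map_mx_derivationX n (A : 'M[R]_n) l :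
  map_mx D (A ^+ l) = \sum_(t < l) A ^+ t *m map_mx D A *m A ^+ (l - t.+1).
Proof.
elim: l => [|l IHl].
  by rewrite big_ord0; apply/matrixP => i j; rewrite !mxE derivation_nat.
rewrite exprSr map_mx_derivationM IHl big_ord_recr /= subnn expr0 mulmx1 mulmx_suml.
congr (_ + _); apply: eq_bigr => t _.
by rewrite -mulmxA subSS -(subnSK (ltn_ord t)) exprSr.
Qed.

Lemma map_mx_derivation_mulmxX m n p (P : 'M[R]_(m, n)) (A : 'M[R]_n) (Q : 'M[R]_(n, p)) l :
  map_mx D (P *m A ^+ l *m Q) =
  map_mx D P *m A ^+ l *m Q
  + P *m (\sum_(t < l) A ^+ t *m map_mx D A *m A ^+ (l - t.+1)) *m Q
  + P *m A ^+ l *m map_mx D Q.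
Proof. by rewrite !map_mx_derivationM map_mx_derivationX mulmxDl. Qed.

Lemma derivation_invn x k : x * k%:R = 1 -> D x = 0.
Proof.
move=> xk; have : D (x * k%:R) = 0 by rewrite xk; exact: (derivation_nat 1).
rewrite (derivationM dD) derivation_nat mulr0 addr0 => Dxk.
by rewrite -[D x]mulr1 -xk mulrA [D x * x]mulrC -mulrA Dxk mulr0.
Qed.

End DerivationTheory.
End Derivations.

Section WordMatrices.
Variables (R : comPzRingType) (m n : nat).
Variables (X : 'M[R]_(m, n)) (B : 'M[R]_n) (Y : 'M[R]_(n, m)).

Definition wmx k : 'M[R]_m := if k is j.+1 then X *m B ^+ j *m Y else 1%:M.

Definition wpair (c d : 'I_m) x y := wmx x *m delta_mx d c *m wmx y.

Lemma wmxS k : wmx k.+1 = X *m B ^+ k *m Y.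
Proof. by []. Qed.

Lemma wmx_subS l t : (t < l)%N -> wmx (l - t) = X *m B ^+ (l - t.+1) *m Y.
Proof. by move=> ltl; rewrite -(subnSK ltl). Qed.

Section Parts.
Variables (k l : nat) (c d : 'I_m).
Local Notation E := (delta_mx d c).

Lemma wpair_antidiag_left :
  (- \sum_(t < l.+1) wmx (l - t) *m E *m (X *m B ^+ t)) *m B ^+ k *m Y
  = - antidiag_sum (wpair c d) (k + l).+1 0 l.+1.
Proof.
rewrite antidiag_sum_rev !mulNmx !mulmx_suml; congr (- _); apply: eq_bigr => t _.
have -> : ((k + l).+1 - (0 + (l.+1 - t.+1)) = (t + k).+1)%N by have := ltn_ord t; lia.
by rewrite add0n subSS /wpair wmxS exprD_mulmx !mulmxA.
Qed.

Lemma wpair_antidiag_middle :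
  X *m (\sum_(t < k) B ^+ t *m ((B ^+ l *m Y) *m E *m X - Y *m E *m (X *m B ^+ l))
        *m B ^+ (k - t.+1)) *m Y
  = antidiag_sum (wpair c d) (k + l).+1 l.+1 k - antidiag_sum (wpair c d) (k + l).+1 1 k.
Proof.
rewrite /antidiag_sum -sumrB mulmx_sumr mulmx_suml; apply: eq_bigr => t _.
have -> : ((k + l).+1 - (l.+1 + t) = k - t)%N by lia.
have -> : ((k + l).+1 - (1 + t) = (l + (k - t.+1)).+1)%N by have := ltn_ord t; lia.
have -> : (l.+1 + t = (t + l).+1)%N by lia.
rewrite /wpair (wmx_subS (ltn_ord t)) add1n !wmxS !exprD_mulmx.
by rewrite !(mulmxBl, mulmxBr) !mulmxA.
Qed.

Lemma wpair_antidiag_right :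
  X *m B ^+ k *m (\sum_(t < l.+1) (B ^+ (l - t) *m Y) *m E *m wmx t)
  = antidiag_sum (wpair c d) (k + l).+1 k.+1 l.+1.
Proof.
rewrite antidiag_sum_rev mulmx_sumr; apply: eq_bigr => t _.
have -> : ((k + l).+1 - (k.+1 + (l.+1 - t.+1)) = t)%N by have := ltn_ord t; lia.
by rewrite subSS addSn /wpair wmxS exprD_mulmx !mulmxA.
Qed.

End Parts.

Lemma wpair_subE c d x y a b :
  (wpair c d x y - wpair c d y x) a b = wmx x a d * wmx y c b - wmx y a d * wmx x c b.
Proof. by rewrite addmxE oppmxE !mul_delta_mulmxE. Qed.

Lemma bracket_kernel_wpair0l c d l a b :
  bracket_kernel (wpair c d) 0 l a b = wmx l.+1 a d * wmx 0 c b - wmx 0 a d * wmx l.+1 c b.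
Proof. by rewrite bracket_kernel0l wpair_subE. Qed.

Lemma bracket_kernel_wpairl0 c d k a b :
  bracket_kernel (wpair c d) k 0 a b = wmx k.+1 a d * wmx 0 c b - wmx 0 a d * wmx k.+1 c b.
Proof. by rewrite bracket_kernell0 wpair_subE. Qed.

Lemma bracket_kernel_wpairSS c d k l a b :
  (bracket_kernel (wpair c d) k.+1 l - bracket_kernel (wpair c d) k l.+1) a b
  = (wmx l.+1 a d * wmx k.+1 c b - wmx k.+1 a d * wmx l.+1 c b) *+ 2.
Proof. by rewrite bracket_kernelSS mulr2n addmxE wpair_subE. Qed.

Lemma bracket_relation_of_kernel (h : R) (T : nat -> 'I_m -> 'I_m -> R)
    (P : nat -> nat -> R) (a b c d : 'I_m) :
  h * 2%:R = 1 ->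
  (forall x y, T 0 x y = wmx 0 x y) -> (forall k x y, T k.+1 x y = h ^+ k * wmx k.+1 x y) ->
  (forall i j, P i.+1 j.+1 = h ^+ (i + j)%N * bracket_kernel (wpair c d) i j a b) ->
  (forall j, P 0 j = 0) -> (forall i, P i 0 = 0) ->
  forall i j, P i.+1 j - P i j.+1 = T j a d * T i c b - T i a d * T j c b.
Proof.
move=> h2 T0 TS PSS P0 Q0 [|i] [|j].
- by rewrite P0 Q0 !subrr.
- by rewrite PSS P0 subr0 bracket_kernel_wpair0l add0n !TS !T0; ring.
- by rewrite Q0 sub0r PSS addn0 bracket_kernel_wpairl0 !TS !T0; ring.
rewrite !PSS addSn addnS -mulrBr -oppmxE -addmxE bracket_kernel_wpairSS !TS.
transitivity (h ^+ i * h ^+ j * (h * 2%:R)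
  * (wmx j.+1 a d * wmx i.+1 c b - wmx i.+1 a d * wmx j.+1 c b)).
  by rewrite exprS exprD; ring.
by rewrite h2 mulr1; ring.
Qed.

Section Derivative.
Variables (D : R -> R) (dD : derivation D).

(* In the next three lemmas D is the bracket with an entry of X, of Y and of B
   respectively; in map_mx_derivation_wmx it is the bracket with (wmx l.+1) c d. *)
Lemma map_mx_derivation_wmx_X (i : 'I_n) (a : 'I_m) l :
  map_mx D X = 0 -> map_mx D Y = - delta_mx i a -> map_mx D B = - (delta_mx i a *m X) ->
  map_mx D (wmx l.+1) = - \sum_(t < l.+1) X *m B ^+ t *m delta_mx i a *m wmx (l - t).
Proof.
move=> DX DY DB; rewrite wmxS map_mx_derivation_mulmxX // DX DY DB !mul0mx add0r.
rewrite big_ord_recr /= subnn opprD mulmx1 mulmxN; congr (_ - _).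
rewrite mulmx_sumr mulmx_suml -sumrN; apply: eq_bigr => t _.
by rewrite (wmx_subS (ltn_ord t)) !(mulmxN, mulNmx) !mulmxA.
Qed.

Lemma map_mx_derivation_wmx_Y (j : 'I_n) (b : 'I_m) l :
  map_mx D X = delta_mx b j -> map_mx D Y = 0 -> map_mx D B = Y *m delta_mx b j ->
  map_mx D (wmx l.+1) = \sum_(t < l.+1) wmx t *m delta_mx b j *m (B ^+ (l - t) *m Y).
Proof.
move=> DX DY DB; rewrite wmxS map_mx_derivation_mulmxX // DX DY DB mulmx0 addr0.
rewrite big_ord_recl /= subn0 mul1mx mulmxA; congr (_ + _).
by rewrite mulmx_sumr mulmx_suml; apply: eq_bigr => t _; rewrite !mulmxA.
Qed.

Lemma map_mx_derivation_wmx_B (p q : 'I_n) l :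
  map_mx D X = X *m delta_mx q p -> map_mx D Y = - (delta_mx q p *m Y) -> map_mx D B = 0 ->
  map_mx D (wmx l.+1) = X *m delta_mx q p *m (B ^+ l *m Y) - X *m B ^+ l *m delta_mx q p *m Y.
Proof.
move=> DX DY DB; rewrite wmxS map_mx_derivation_mulmxX // DX DY DB.
rewrite big1 => [|t _]; last by rewrite mulmx0 mul0mx.
by rewrite mulmx0 mul0mx addr0 mulmxN !mulmxA.
Qed.

Lemma map_mx_derivation_wmx k l c d :
  map_mx D X = - \sum_(t < l.+1) wmx (l - t) *m delta_mx d c *m (X *m B ^+ t) ->
  map_mx D Y = \sum_(t < l.+1) (B ^+ (l - t) *m Y) *m delta_mx d c *m wmx t ->
  map_mx D B = (B ^+ l *m Y) *m delta_mx d c *m X - Y *m delta_mx d c *m (X *m B ^+ l) ->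
  map_mx D (wmx k.+1) = bracket_kernel (wpair c d) k l.
Proof.
move=> DX DY DB; rewrite wmxS map_mx_derivation_mulmxX // DX DY DB.
rewrite wpair_antidiag_left wpair_antidiag_middle wpair_antidiag_right.
by rewrite /bracket_kernel addrA (ACl ((4*2)*1*3)).
Qed.

End Derivative.
End WordMatrices.

Lemma derivation_mderiv n (R : comNzRingType) (u : 'I_n) : derivation (@mderiv n R u).
Proof. by split=> f g; rewrite ?mderivB ?mderivM. Qed.

Lemma mderiv_mpolyX n (R : nzRingType) (u v : 'I_n) : mderiv u ('X_v : {mpoly R[n]}) = (v == u)%:R.
Proof.
rewrite mderivX mnm1E; case: eqP => [->|_]; last by rewrite scale0r.
have -> : (U_(u) - U_(u) = 0)%MM by apply/mnmP => j; rewrite mnmBE mnm0E subnn.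
by rewrite mpolyX0 scale1r.
Qed.

Lemma mxvec_index_eq m n (i i' : 'I_m) (j j' : 'I_n) :
  (mxvec_index i j == mxvec_index i' j') = (i == i') && (j == j').
Proof.
by rewrite /mxvec_index (inj_eq (@cast_ord_inj _ _ _)) (inj_eq (@enum_rank_inj _)).
Qed.

Definition var_eqE := (eq_lshift, eq_rshift, eq_lrshift, eq_rlshift, mxvec_index_eq).

Section PoissonBracket.
Variables (F : numClosedFieldType) (N K : nat).
Local Notation R := (RepPoly F N K).
Local Notation Bm := (Bmx F N K).
Local Notation Psi := (Psimx F N K).
Local Notation Psibar := (Psibarmx F N K).
Local Notation Bt := (Btilde F N K).
Implicit Types f g h : R.

Lemma pbr_derivation_l g : derivation (fun f => pbr f g).
Proof.
apply: derivation_add.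
  apply: derivation_big => i; apply: derivation_big => a.
  by apply: derivation_sub; apply: derivation_mulr; apply: derivation_mderiv.
apply: derivation_big => m; apply: derivation_big => n.
apply: derivation_big => p; apply: derivation_big => q.
by do 2!apply: derivation_mulr; apply: derivation_mderiv.
Qed.

Lemma pbrBl f h g : pbr (f - h) g = pbr f g - pbr h g.
Proof. exact: (derivationB (pbr_derivation_l g)). Qed.

Lemma pbrMl f h g : pbr (f * h) g = pbr f g * h + f * pbr h g.
Proof. exact: (derivationM (pbr_derivation_l g)). Qed.

Lemma brBB_antisym (m n p q : 'I_N) : brBB F K p q m n = - brBB F K m n p q.
Proof. by rewrite /brBB [q == m]eq_sym [p == n]eq_sym opprB. Qed.

Lemma pbr_antisym f g : pbr g f = - pbr f g.
Proof.
rewrite /pbr opprD -!sumrN; congr (_ + _).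
  apply: eq_bigr => i _; rewrite -sumrN; apply: eq_bigr => a _; ring.
have swap_pairs (G : 'I_N -> 'I_N -> 'I_N -> 'I_N -> R) :
    \sum_m \sum_n \sum_p \sum_q G m n p q = \sum_p \sum_q \sum_m \sum_n G m n p q.
  under eq_bigr => m _ do rewrite exchange_big.
  rewrite exchange_big; apply: eq_bigr => p _.
  by under eq_bigr => m _ do rewrite exchange_big; rewrite exchange_big.
rewrite swap_pairs; apply: eq_bigr => m _; rewrite -sumrN; apply: eq_bigr => n _.
rewrite -sumrN; apply: eq_bigr => p _; rewrite -sumrN; apply: eq_bigr => q _.
rewrite brBB_antisym; ring.
Qed.

Lemma pbr_derivation_r f : derivation (pbr f).
Proof.
split=> g h; rewrite !(pbr_antisym _ f); first by rewrite pbrBl opprB opprK addrC.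
by rewrite pbrMl; ring.
Qed.

Lemma pbrDl f h g : pbr (f + h) g = pbr f g + pbr h g.
Proof. exact: (derivationD (pbr_derivation_l g)). Qed.

Lemma pbr_suml I r (P : pred I) (E : I -> R) g :
  pbr (\sum_(i <- r | P i) E i) g = \sum_(i <- r | P i) pbr (E i) g.
Proof. exact: (derivation_sum (pbr_derivation_l g)). Qed.

Lemma pbrDr f g h : pbr f (g + h) = pbr f g + pbr f h.
Proof. exact: (derivationD (pbr_derivation_r f)). Qed.

Lemma pbrMr f g h : pbr f (g * h) = pbr f g * h + g * pbr f h.
Proof. exact: (derivationM (pbr_derivation_r f)). Qed.

Lemma pbr_sumr I r (P : pred I) (E : I -> R) f :
  pbr f (\sum_(i <- r | P i) E i) = \sum_(i <- r | P i) pbr f (E i).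
Proof. exact: (derivation_sum (pbr_derivation_r f)). Qed.

Lemma pbr_Psi_l i a g : pbr (Psi i a) g = mderiv (varPsibar a i) g.
Proof.
rewrite mxE /pbr [X in _ + X]big1 ?addr0 => [|m _]; last first.
  rewrite big1 // => n _; rewrite big1 // => p _; rewrite big1 // => q _.
  by rewrite mderiv_mpolyX !var_eqE !mul0r.
under eq_bigr => i' _ do under eq_bigr => a' _ do
  rewrite !mderiv_mpolyX !var_eqE /= mul0r subr0.
exact: sum_delta2.
Qed.

Lemma pbr_Psibar_l a i g : pbr (Psibar a i) g = - mderiv (varPsi i a) g.
Proof.
rewrite mxE /pbr [X in _ + X]big1 ?addr0 => [|m _]; last first.
  rewrite big1 // => n _; rewrite big1 // => p _; rewrite big1 // => q _.
  by rewrite mderiv_mpolyX !var_eqE !mul0r.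
under eq_bigr => i' _ do under eq_bigr => a' _ do
  rewrite !mderiv_mpolyX !var_eqE /= mul0r sub0r -mulrN.
by rewrite exchange_big (sum_delta2 a i (fun a' i' => - mderiv (varPsi i' a') g)).
Qed.

Lemma pbr_B_l m n g :
  pbr (Bm m n) g = \sum_p \sum_q mderiv (varB K p q) g * brBB F K m n p q.
Proof.
rewrite mxE /pbr big1 ?add0r => [|i _]; last first.
  by rewrite big1 // => a _; rewrite !mderiv_mpolyX !var_eqE !mul0r subrr.
under eq_bigr => m' _ do under eq_bigr => n' _ do under eq_bigr => p _ do
  under eq_bigr => q _ do rewrite mderiv_mpolyX !var_eqE -mulrA.
under eq_bigr => m' _ do under eq_bigr => n' _ do under eq_bigr => p _ do
  rewrite -mulr_sumr.
under eq_bigr => m' _ do under eq_bigr => n' _ do rewrite -mulr_sumr.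
exact: (sum_delta2 m n (fun m' n' => \sum_p \sum_q mderiv (varB K p q) g * brBB F K m' n' p q)).
Qed.

Lemma pbr_Psi_Psi i a j b : pbr (Psi i a) (Psi j b) = 0.
Proof. by rewrite pbr_Psi_l mxE mderiv_mpolyX !var_eqE. Qed.

Lemma pbr_Psi_Psibar i a b j : pbr (Psi i a) (Psibar b j) = ((b == a) && (j == i))%:R.
Proof. by rewrite pbr_Psi_l mxE mderiv_mpolyX !var_eqE. Qed.

Lemma pbr_Psi_B i a m n : pbr (Psi i a) (Bm m n) = 0.
Proof. by rewrite pbr_Psi_l mxE mderiv_mpolyX !var_eqE. Qed.

Lemma pbr_Psibar_Psi a i j b : pbr (Psibar a i) (Psi j b) = - ((j == i) && (b == a))%:R.
Proof. by rewrite pbr_Psibar_l mxE mderiv_mpolyX !var_eqE. Qed.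

Lemma pbr_Psibar_Psibar a i b j : pbr (Psibar a i) (Psibar b j) = 0.
Proof. by rewrite pbr_Psibar_l mxE mderiv_mpolyX !var_eqE oppr0. Qed.

Lemma pbr_Psibar_B a i m n : pbr (Psibar a i) (Bm m n) = 0.
Proof. by rewrite pbr_Psibar_l mxE mderiv_mpolyX !var_eqE oppr0. Qed.

Lemma pbr_B_Psi m n i a : pbr (Bm m n) (Psi i a) = 0.
Proof.
by rewrite pbr_B_l big1 // => p _; rewrite big1 // => q _; rewrite mxE mderiv_mpolyX !var_eqE mul0r.
Qed.

Lemma pbr_B_Psibar m n a i : pbr (Bm m n) (Psibar a i) = 0.
Proof.
by rewrite pbr_B_l big1 // => p _; rewrite big1 // => q _; rewrite mxE mderiv_mpolyX !var_eqE mul0r.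
Qed.

Lemma pbr_B_B m n p q : pbr (Bm m n) (Bm p q) = brBB F K m n p q.
Proof.
rewrite pbr_B_l -[RHS](sum_delta2 p q (brBB F K m n)).
by apply: eq_bigr => p' _; apply: eq_bigr => q' _; rewrite mxE mderiv_mpolyX !var_eqE mulrC.
Qed.

Lemma BtildeE m n : Bt m n = Bm m n + \sum_r Psi m r * Psibar r n.
Proof. by rewrite !mxE; congr (_ + _); apply: eq_bigr => r _; rewrite !mxE. Qed.

Lemma pbr_Btilde_Psibar m n c p : pbr (Bt m n) (Psibar c p) = (m == p)%:R * Psibar c n.
Proof.
rewrite BtildeE pbrDl pbr_B_Psibar add0r pbr_suml (bigD1 c) //= big1 => [|r /negbTE nrc].
  by rewrite pbrMl pbr_Psi_Psibar pbr_Psibar_Psibar !eqxx mulr0 !addr0 eq_sym.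
by rewrite pbrMl pbr_Psi_Psibar pbr_Psibar_Psibar eq_sym nrc mulr0 mul0r addr0.
Qed.

Lemma pbr_Btilde_Psi m n q d : pbr (Bt m n) (Psi q d) = - ((n == q)%:R * Psi m d).
Proof.
rewrite BtildeE pbrDl pbr_B_Psi add0r pbr_suml (bigD1 d) //= big1 => [|r /negbTE nrd].
  by rewrite pbrMl pbr_Psi_Psi pbr_Psibar_Psi !eqxx mul0r andbT !add0r addr0 mulrN mulrC eq_sym.
by rewrite pbrMl pbr_Psi_Psi pbr_Psibar_Psi [d == r]eq_sym nrd andbF oppr0 mulr0 mul0r addr0.
Qed.

Lemma pbr_Btilde_B m n p q : pbr (Bt m n) (Bm p q) = brBB F K m n p q.
Proof.
rewrite BtildeE pbrDl pbr_B_B pbr_suml big1 ?addr0 // => r _.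
by rewrite pbrMl pbr_Psi_B pbr_Psibar_B mul0r mulr0 addr0.
Qed.

Lemma pbr_Btilde m n p q : pbr (Bt m n) (Bt p q) = 0.
Proof.
rewrite [Bt p q]BtildeE pbrDr pbr_Btilde_B pbr_sumr.
under eq_bigr => s _ do rewrite pbrMr pbr_Btilde_Psi pbr_Btilde_Psibar.
rewrite /brBB !mulr_sumr -sumrB -big_split /= big1 // => s _; rewrite !mxE; ring.
Qed.

Local Notation Wmx := (wmx Psibar Bt Psi).
Local Notation Wpair := (wpair Psibar Bt Psi).

Lemma map_pbr_Psibar_Psibar a i : map_mx (pbr (Psibar a i)) Psibar = 0.
Proof. by apply/matrixP => c p; rewrite mxE pbr_Psibar_Psibar mxE. Qed.

Lemma map_pbr_Psibar_Psi a i : map_mx (pbr (Psibar a i)) Psi = - delta_mx i a.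
Proof. by apply/matrixP => j d; rewrite mxE pbr_Psibar_Psi !mxE. Qed.

Lemma map_pbr_Psibar_Btilde a i : map_mx (pbr (Psibar a i)) Bt = - (delta_mx i a *m Psibar).
Proof.
by apply/matrixP => m n; rewrite mxE pbr_antisym pbr_Btilde_Psibar [RHS]mxE delta_mulmxE eq_sym.
Qed.

Lemma map_pbr_Psi_Psibar j b : map_mx (pbr (Psi j b)) Psibar = delta_mx b j.
Proof. by apply/matrixP => c p; rewrite mxE pbr_Psi_Psibar mxE. Qed.

Lemma map_pbr_Psi_Psi j b : map_mx (pbr (Psi j b)) Psi = 0.
Proof. by apply/matrixP => q d; rewrite mxE pbr_Psi_Psi mxE. Qed.

Lemma map_pbr_Psi_Btilde j b : map_mx (pbr (Psi j b)) Bt = Psi *m delta_mx b j.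
Proof.
by apply/matrixP => m n; rewrite mxE pbr_antisym pbr_Btilde_Psi opprK mulmx_deltaE mulrC.
Qed.

Lemma map_pbr_Btilde_Psibar m n : map_mx (pbr (Bt m n)) Psibar = Psibar *m delta_mx n m.
Proof.
by apply/matrixP => c p; rewrite mxE pbr_Btilde_Psibar mulmx_deltaE mulrC eq_sym.
Qed.

Lemma map_pbr_Btilde_Psi m n : map_mx (pbr (Bt m n)) Psi = - (delta_mx n m *m Psi).
Proof.
by apply/matrixP => q d; rewrite mxE pbr_Btilde_Psi [RHS]mxE delta_mulmxE eq_sym.
Qed.

Lemma map_pbr_Btilde_Btilde m n : map_mx (pbr (Bt m n)) Bt = 0.
Proof. by apply/matrixP => p q; rewrite mxE pbr_Btilde mxE. Qed.

Lemma map_pbr_swap r s p q (P : 'M[R]_(r, s)) (G : 'M[R]_(p, q)) x y c d :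
  map_mx (fun f => pbr f (G c d)) P x y = map_mx (pbr (P x y)) G c d.
Proof. by rewrite !mxE. Qed.

Local Notation pbrW l c d := (fun f => pbr f (Wmx l.+1 c d)).

Lemma map_pbrW_Psibar l c d :
  map_mx (pbrW l c d) Psibar =
  - \sum_(t < l.+1) Wmx (l - t) *m delta_mx d c *m (Psibar *m Bt ^+ t).
Proof.
apply/matrixP => a i; rewrite map_pbr_swap.
rewrite (map_mx_derivation_wmx_X (pbr_derivation_r _) _ (map_pbr_Psibar_Psibar a i)
  (map_pbr_Psibar_Psi a i) (map_pbr_Psibar_Btilde a i)).
rewrite !oppmxE !summxE; congr (- _); apply: eq_bigr => t _.
by rewrite !mul_delta_mulmxE mulrC.
Qed.

Lemma map_pbrW_Psi l c d :
  map_mx (pbrW l c d) Psi =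
  \sum_(t < l.+1) (Bt ^+ (l - t) *m Psi) *m delta_mx d c *m Wmx t.
Proof.
apply/matrixP => j b; rewrite map_pbr_swap.
rewrite (map_mx_derivation_wmx_Y (pbr_derivation_r _) _ (map_pbr_Psi_Psibar j b)
  (map_pbr_Psi_Psi j b) (map_pbr_Psi_Btilde j b)).
rewrite !summxE; apply: eq_bigr => t _.
by rewrite !mul_delta_mulmxE mulrC.
Qed.

Lemma map_pbrW_Btilde l c d :
  map_mx (pbrW l c d) Bt =
  (Bt ^+ l *m Psi) *m delta_mx d c *m Psibar - Psi *m delta_mx d c *m (Psibar *m Bt ^+ l).
Proof.
apply/matrixP => m n; rewrite map_pbr_swap.
rewrite (map_mx_derivation_wmx_B (pbr_derivation_r _) _ (map_pbr_Btilde_Psibar m n)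
  (map_pbr_Btilde_Psi m n) (map_pbr_Btilde_Btilde m n)) !addmxE !oppmxE.
by rewrite !mul_delta_mulmxE mulrC [_ * Psi m d]mulrC.
Qed.

Lemma pbr_Wmx k l a b c d :
  pbr (Wmx k.+1 a b) (Wmx l.+1 c d) = bracket_kernel (Wpair c d) k l a b.
Proof.
transitivity (map_mx (pbrW l c d) (Wmx k.+1) a b); first by rewrite [RHS]mxE.
by rewrite (map_mx_derivation_wmx (pbr_derivation_l _) k (map_pbrW_Psibar l c d)
  (map_pbrW_Psi l c d) (map_pbrW_Btilde l c d)).
Qed.

Local Notation half := ((2%:R^-1 : F)%:MP : R).

Lemma half_expr_natr n : half ^+ n * (2 ^ n)%:R = 1.
Proof.
rewrite natrX -exprMn -mpolyC_nat -mpolyCM mulVf ?mpolyC1 ?expr1n //.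
by rewrite pnatr_eq0.
Qed.

Lemma half_natr : half * 2%:R = 1.
Proof. exact: (half_expr_natr 1). Qed.

Lemma pbr_half_l n g : pbr (half ^+ n) g = 0.
Proof. exact: (derivation_invn (pbr_derivation_l g) (half_expr_natr n)). Qed.

Lemma pbr_half_r n f : pbr f (half ^+ n) = 0.
Proof. exact: (derivation_invn (pbr_derivation_r f) (half_expr_natr n)). Qed.

Lemma piT_succ j a b : piT F N K j.+1 a b = half ^+ j * Wmx j.+1 a b.
Proof. by rewrite /piT mxE -exprVn rmorphXn. Qed.

Lemma piT0 a b : piT F N K 0 a b = Wmx 0 a b.
Proof. by rewrite /piT mxE. Qed.

Lemma pbr_piT0_l a b g : pbr (piT F N K 0 a b) g = 0.
Proof. by rewrite /piT; exact: (derivation_nat (pbr_derivation_l g)). Qed.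

Lemma pbr_piT0_r a b f : pbr f (piT F N K 0 a b) = 0.
Proof. by rewrite /piT; exact: (derivation_nat (pbr_derivation_r f)). Qed.

Lemma pbr_piT_succ i j a b c d :
  pbr (piT F N K i.+1 a b) (piT F N K j.+1 c d)
  = half ^+ (i + j)%N * bracket_kernel (Wpair c d) i j a b.
Proof.
rewrite !piT_succ pbrMl pbr_half_l mul0r add0r pbrMr pbr_half_r mul0r add0r.
by rewrite pbr_Wmx exprD mulrA.
Qed.

End PoissonBracket.

Theorem mainTheorem12 (F : numClosedFieldType) (N K : nat) :
  (forall (i j : nat) (a b c d : 'I_K),
     pbr (piT F N K i.+1 a b) (piT F N K j c d)
     - pbr (piT F N K i a b) (piT F N K j.+1 c d)
     = piT F N K j a d * piT F N K i c b - piT F N K i a d * piT F N K j c b)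
  /\ (forall (j : nat) (a b c d : 'I_K), pbr (piT F N K 0 a b) (piT F N K j c d) = 0)
  /\ (forall (i : nat) (a b c d : 'I_K), pbr (piT F N K i a b) (piT F N K 0 c d) = 0).
Proof.
split; [|split=> i a b c d; [exact: pbr_piT0_l | exact: pbr_piT0_r]].
move=> i j a b c d.
apply: (bracket_relation_of_kernel (P := fun i j => pbr (piT F N K i a b) (piT F N K j c d))
  (half_natr F N K) (@piT0 F N K) (@piT_succ F N K)) => [{}i {}j | {}j | {}i].
- exact: pbr_piT_succ.
- exact: pbr_piT0_l.
- exact: pbr_piT0_r.
Qed.
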